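(* Let $\lambda=[8,8,8,8,4,4,4,4]$ and $\mu=[16,\underbrace{2,\ldots,2}_{16},\underbrace{1,\ldots,1}_{16}]$. Then $\|\lambda\|_p\le\|\mu\|_p$ for all $p\in[1,\infty]$ (so $\lambda$ bulk-embeds into $\mu$), with equality at $p=\ln(1+\sqrt5)/\ln 2>1$; consequently $\lambda$ does not stably embed into $\mu$. Moreover $\lambda\not\preccurlyeq_S\mu$.
   Context: Partitions are finite nonincreasing sequences of positive integers. For $p\in[1,\infty)$, $\|\lambda\|_p=(\sum_i\lambda_i^p)^{1/p}$ and $\|\lambda\|_\infty=\max_i\lambda_i$. The product $\lambda\times\nu$ is the partition of all products $\lambda_i\nu_j$, reordered nonincreasingly. $\lambda=[\lambda_1,\ldots,\lambda_m]$ embeds into $\mu=[\mu_1,\ldots,\mu_n]$ if there is a map $\varphi:\{1,\ldots,m\}\to\{1,\ldots,n\}$ with $\sum_{i\in\varphi^{-1}(j)}\lambda_i\le\mu_j$ for all $j$; $\lambda$ stably embeds into $\mu$ if $\lambda\times\nu$ embeds into $\mu\times\nu$ for some partition $\nu$. $\lambda$ bulk-embeds into $\mu$ if for every rational $\epsilon>0$ there is $N$ with $\lambda^{\times N}$ embedding into $\mu^{\times N(1+\epsilon)}$ (equivalently $\|\lambda\|_p\le\|\mu\|_p$ for all $p\in[1,\infty]$). $\lambda\preccurlyeq_S\mu$ means: for every $x\in\mathbb N$, $\sum_{\lambda_i\ge x}\lambda_i\le\sum_{\mu_j\ge x}\mu_j$. *)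

From HB Require Import structures.
From mathcomp Require Import all_boot all_order all_algebra.
From mathcomp Require Import all_classical all_reals.
From mathcomp Require Import exp.
Set Implicit Arguments. Unset Strict Implicit. Unset Printing Implicit Defensive.
Import Order.TTheory GRing.Theory Num.Theory.

Definition is_partition (s : seq nat) : bool :=
  sorted geq s && all (fun x => 0 < x)%N s.

Definition embeds (lam mu : seq nat) : Prop :=
  exists phi : 'I_(size lam) -> 'I_(size mu),
    forall j : 'I_(size mu),
      (\sum_(i : 'I_(size lam) | phi i == j) nth 0 lam i <= nth 0 mu j)%N.

Definition part_prod (lam nu : seq nat) : seq nat :=
  sort geq [seq (x * y)%N | x <- lam, y <- nu].

Definition stably_embeds (lam mu : seq nat) : Prop :=
  exists nu : seq nat, [/\ is_partition nu, (0 < size nu)%N &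
                          embeds (part_prod lam nu) (part_prod mu nu)].

Definition S_le (lam mu : seq nat) : Prop :=
  forall x : nat,
    (\sum_(y <- lam | (x <= y)%N) y <= \sum_(y <- mu | (x <= y)%N) y)%N.

Local Open Scope ring_scope.

Definition pnorm (R : realType) (p : R) (s : seq nat) : R :=
  (\sum_(x <- s) (x%:R : R) `^ p) `^ (p^-1).

Definition infnorm (R : realType) (s : seq nat) : R :=
  ((\max_(x <- s) x)%N)%:R.

Definition lam7 : seq nat := [:: 8; 8; 8; 8; 4; 4; 4; 4]%N.
Definition mu7 : seq nat := (16%N :: nseq 16 2%N) ++ nseq 16 1%N.

(* With t = 2^p, the p-th power sums are 4t^3 + 4t^2 for lam7 and t^4 + 16t + 16 for mu7;
   their difference is the square (t^2 - 2t - 4)^2, which vanishes exactly at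
   t = 1 + sqrt 5.  Power sums are multiplicative under the product of partitions and
   can only grow along an embedding, strictly so when the target has more (positive)
   parts.  Hence a stable embedding of lam7 (8 parts) into mu7 (33 parts) would give a
   strict inequality of power sums at every p >= 1, contradicting the equality at
   p = log_2 (1 + sqrt 5). *)
From HB Require Import structures.
From mathcomp Require Import all_boot all_order all_algebra.
From mathcomp Require Import all_classical all_reals.
From mathcomp Require Import exp.
From mathcomp Require Import ring lra.
Set Implicit Arguments. Unset Strict Implicit. Unset Printing Implicit Defensive.
Import Order.TTheory GRing.Theory Num.Theory.
Local Open Scope ring_scope.

Section PowerSums.
Variable R : realType.
Implicit Types (p : R) (a b : seq nat).

Definition power_sum p a : R := \sum_(x <- a) (x%:R : R) `^ p.

Lemma pnorm_le_of_power_sum_le p a b :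
  0 < p -> power_sum p a <= power_sum p b -> pnorm p a <= pnorm p b.
Proof.
move=> p_gt0 le_ab; apply: ge0_ler_powR => //.
- by rewrite invr_ge0 ltW.
- by rewrite nnegrE sumr_ge0 // => *; exact: powR_ge0.
- by rewrite nnegrE sumr_ge0 // => *; exact: powR_ge0.
Qed.

Lemma powR_exprn (x p : R) n : 0 <= x -> (x ^+ n) `^ p = (x `^ p) ^+ n.
Proof.
move=> x_ge0; elim: n => [|n IHn]; first by rewrite !expr0 powR1.
by rewrite !exprS powRM ?exprn_ge0 // IHn.
Qed.

Lemma sum_powR_le (I : finType) (P : pred I) (x : I -> R) (y p : R) :
  1 <= p -> (forall i, P i -> 0 <= x i) -> \sum_(i | P i) x i <= y ->
  \sum_(i | P i) x i `^ p <= y `^ p.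
Proof.
move=> p_ge1 x_ge0 sum_le_y.
have p_gt0 : 0 < p by lra.
have sum_ge0 : 0 <= \sum_(i | P i) x i by exact: sumr_ge0.
have x_le_y i : P i -> x i <= y.
  move=> Pi; apply: le_trans sum_le_y; rewrite (bigD1 i) //= lerDl.
  by apply: sumr_ge0 => j /andP[Pj _]; exact: x_ge0.
apply: (@le_trans _ _ (\sum_(i | P i) x i * y `^ (p - 1))).
  apply: ler_sum => i Pi; rewrite -mulr_powRB1 ?x_ge0 //.
  apply: ler_wpM2l; first exact: x_ge0.
  by apply: ge0_ler_powR; rewrite ?nnegrE ?subr_ge0 ?x_ge0 ?x_le_y //; lra.
rewrite -big_distrl /= -[y `^ p]mulr_powRB1 //; last exact: le_trans sum_le_y.
by apply: ler_wpM2r; first exact: powR_ge0.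
Qed.

Lemma exists_ord_notin_image m n (f : 'I_m -> 'I_n) :
  (m < n)%N -> exists j, forall i, f i != j.
Proof.
move=> lt_mn; case: (pickP [pred j | j \notin f @: 'I_m]) => [j /= j_unhit|all_hit].
  by exists j => i; apply: contraNneq j_unhit => <-; exact: imset_f.
have : [set: 'I_n] \subset f @: 'I_m by apply/fintype.subsetP => j _; exact/negbFE/all_hit.
move/subset_leq_card; rewrite cardsT card_ord => /leq_trans/(_ (leq_imset_card _ _)).
by rewrite card_ord leqNgt lt_mn.
Qed.

(* Every part of [b] missed by the embedding contributes a positive term. *)
Lemma power_sum_embeds_lt p a b :
  1 <= p -> all (fun x => 0 < x)%N b -> (size a < size b)%N -> embeds a b ->
  power_sum p a < power_sum p b.
Proof.
move=> p_ge1 b_pos lt_size [phi phi_fits].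
have [j0 j0_unhit] := exists_ord_notin_image phi lt_size.
rewrite /power_sum [X in X < _](big_nth 0%N) [X in _ < X](big_nth 0%N) !big_mkord.
rewrite (partition_big phi xpredT) // [X in _ < X](bigD1 j0) // [X in X < _](bigD1 j0) //=.
apply: ltr_leD.
  rewrite big1 => [|i /eqP phi_i]; last by have := j0_unhit i; rewrite phi_i eqxx.
  by apply: powR_gt0; rewrite ltr0n; apply: (allP b_pos); rewrite mem_nth.
apply: ler_sum => j _; apply: sum_powR_le => //.
by rewrite -natr_sum ler_nat phi_fits.
Qed.

Lemma power_sum_part_prod p a b :
  power_sum p (part_prod a b) = power_sum p a * power_sum p b.
Proof.
rewrite /power_sum /part_prod (perm_big _ (permEl (perm_sort _ _))).
rewrite big_allpairs_dep /= big_distrl; apply: eq_bigr => x _.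
by rewrite big_distrr; apply: eq_bigr => y _; rewrite natrM powRM ?ler0n.
Qed.

Lemma power_sum_stably_embeds_lt p a b :
  1 <= p -> all (fun x => 0 < x)%N b -> (size a < size b)%N -> stably_embeds a b ->
  power_sum p a < power_sum p b.
Proof.
move=> p_ge1 b_pos lt_size [nu [/andP[_ nu_pos] nu_nonempty emb]].
have prod_pos : all (fun x => 0 < x)%N (part_prod b nu).
  apply/allP => z; rewrite mem_sort => /allpairsP[[x y] [xb ynu ->]] /=.
  by rewrite muln_gt0 (allP b_pos) ?(allP nu_pos).
have prod_lt_size : (size (part_prod a nu) < size (part_prod b nu))%N.
  by rewrite !size_sort !size_allpairs ltn_pmul2r.
have := power_sum_embeds_lt p_ge1 prod_pos prod_lt_size emb.
rewrite !power_sum_part_prod; apply: contraTT; rewrite -!leNgt => le_ba.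
by apply: ler_wpM2r => //; apply: sumr_ge0 => *; exact: powR_ge0.
Qed.

Lemma power_sum_lam7 p : power_sum p lam7 = 4 * (2 `^ p) ^+ 3 + 4 * (2 `^ p) ^+ 2.
Proof.
rewrite /power_sum /lam7 !big_cons big_nil.
rewrite -[8%N]/(2 ^ 3)%N -[4%N]/(2 ^ 2)%N !natrX !powR_exprn ?ler0n //; ring.
Qed.

Lemma power_sum_mu7 p : power_sum p mu7 = (2 `^ p) ^+ 4 + 16 * 2 `^ p + 16.
Proof.
rewrite /power_sum /mu7 /= !big_cons big_nil powR1.
rewrite -[16%N]/(2 ^ 4)%N natrX powR_exprn ?ler0n //; ring.
Qed.

Lemma power_sum_mu7_sub_lam7 p :
  power_sum p mu7 - power_sum p lam7 = ((2 `^ p) ^+ 2 - 2 * 2 `^ p - 4) ^+ 2.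
Proof. by rewrite power_sum_lam7 power_sum_mu7; ring. Qed.

Definition golden_exponent : R := ln (1 + Num.sqrt 5) / ln 2.

Lemma golden_exponent_gt1 : 1 < golden_exponent.
Proof.
have ln2_gt0 : 0 < ln (2 : R) by apply: ln_gt0; lra.
have sqrt5_gt1 : 1 < Num.sqrt (5 : R) by rewrite -[X in X < _]sqrtr1 ltr_sqrt; lra.
by rewrite ltr_pdivlMr // mul1r ltr_ln ?posrE; lra.
Qed.

Lemma powR2_golden_exponent : 2 `^ golden_exponent = 1 + Num.sqrt 5.
Proof.
have ln2_gt0 : 0 < ln (2 : R) by apply: ln_gt0; lra.
rewrite /powR pnatr_eq0 /golden_exponent divfK ?gt_eqF // lnK // posrE.
by rewrite ltr_wpDr ?sqrtr_ge0.
Qed.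

Lemma power_sum_golden_exponent :
  power_sum golden_exponent lam7 = power_sum golden_exponent mu7.
Proof.
apply/eqP; rewrite eq_sym -subr_eq0 power_sum_mu7_sub_lam7 powR2_golden_exponent.
have -> : (1 + Num.sqrt (5 : R)) ^+ 2 - 2 * (1 + Num.sqrt 5) - 4 = Num.sqrt 5 ^+ 2 - 5.
  by ring.
by rewrite sqr_sqrtr ?ler0n // subrr expr0n.
Qed.

End PowerSums.

Theorem mainTheorem7 (R : realType) :
  is_partition lam7 /\ is_partition mu7 /\
      (forall p : R, 1 <= p -> pnorm p lam7 <= pnorm p mu7) /\
      infnorm R lam7 <= infnorm R mu7 /\
      (let p0 : R := ln (1 + Num.sqrt 5) / ln 2 in
         1 < p0 /\ pnorm p0 lam7 = pnorm p0 mu7) /\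
      ~ stably_embeds lam7 mu7 /\
      ~ S_le lam7 mu7.
Proof.
split; first by [].
split; first by [].
split.
  move=> p p_ge1; apply: pnorm_le_of_power_sum_le; first lra.
  by rewrite -subr_ge0 power_sum_mu7_sub_lam7 sqr_ge0.
split; first by rewrite /infnorm ler_nat unlock.
split.
  split; first exact: golden_exponent_gt1.
  by rewrite /pnorm -/(power_sum _ _) -/(power_sum _ mu7) power_sum_golden_exponent.
(* The parts >= 3 sum to 48 in lam7 but only to 16 in mu7. *)
split; last by move/(_ 3%N); rewrite unlock.
move/(power_sum_stably_embeds_lt (a := lam7) (b := mu7) (ltW (golden_exponent_gt1 R)) isT isT).
by rewrite power_sum_golden_exponent ltxx.
Qed.
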